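(* Let $n\ge1$, $z\in\{1,\dots,n+1\}$, and let $v_{n,z}=(a_1,\dots,a_n)$ with $a_i=z+1-i$ for $i<z$ and $a_i=1$ for $i\ge z$. Then the vector $(T_1(v_{n,z}),\dots,T_n(v_{n,z}))$ defines a Dyck path of length $2(n+1)$.
   Context: A Dyck path of length $2N$ is a word $w$ in the letters $U,D$ with $N$ letters $U$ and $N$ letters $D$ such that every prefix of $w$ contains at least as many $U$'s as $D$'s; $\mathfrak{D}_{2N}$ denotes the set of them. For $G\in\mathfrak{D}_{2(n+1)}$ let $m_i$ be the number of $U$'s preceding the $i$-th $D$ in $G$, and set $v_G=(v_1,\dots,v_n)$ with $v_i=m_i-i+1$. A vector $w\in\mathbb{Z}^n$ defines a Dyck path of length $2(n+1)$ if $w=v_G$ for some $G\in\mathfrak{D}_{2(n+1)}$. For $u=(u_1,\dots,u_m)\in\mathbb{N}^m$ and $1\le i\le m$, $T_i(u)$ is defined as follows: put $r_0=u_i$; as long as there is an index $l\in\{1,\dots,i\}$ with $r_k-u_l>0$, let $l_k$ be the largest such index and set $r_{k+1}=r_k-u_{l_k}$; if the process stops at $r_t$ (with $t\ge0$ steps), then $T_i(u)=r_t+t$. (In particular $T_i(u)=u_i$ if $u_i-u_l\le0$ for all $l\le i$.) For example, for $u=(14,52,4,23,9,2)$ one gets $(T_1(u),\dots,T_6(u))=(14,13,4,8,3,2)$. *)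

From mathcomp Require Import all_boot all_order all_algebra.
Set Implicit Arguments. Unset Strict Implicit. Unset Printing Implicit Defensive.
Import GRing.Theory Num.Theory.

(* Words in U,D are encoded as seq bool: true = U, false = D. *)

Definition is_dyck (N : nat) (w : seq bool) : Prop :=
  size w = N.*2 /\ count id w = N /\
  forall k, count negb (take k w) <= count id (take k w).

Fixpoint ups_before_D (s : seq bool) (c : nat) : seq nat :=
  match s with
  | [::] => [::]
  | true :: s' => ups_before_D s' c.+1
  | false :: s' => c :: ups_before_D s' c
  end.

Definition mD (G : seq bool) (i : nat) : nat := nth 0 (ups_before_D G 0) i.-1.

Definition vG (n : nat) (G : seq bool) : seq int :=
  [seq ((mD G i)%:Z - i%:Z + 1)%R | i <- iota 1 n].

Definition defines_dyck (n : nat) (w : seq int) : Prop :=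
  exists G, is_dyck n.+1 G /\ vG n G = w.

Definition ucoord (u : seq nat) (l : nat) : nat := nth 0 u l.-1.

Definition Tstep (u : seq nat) (i r : nat) : option nat :=
  let ls := [seq l <- iota 1 i | ucoord u l < r] in
  if ls is [::] then None else Some (r - ucoord u (last 0 ls)).

Fixpoint Tloop (u : seq nat) (i fuel r t : nat) : nat :=
  match fuel with
  | 0 => r + t
  | f.+1 => match Tstep u i r with
            | None => r + t
            | Some r' => Tloop u i f r' t.+1
            end
  end.

(* Fuel u_i + 1: whenever the process terminates with u_i > 0 all
   u_1..u_i are positive, so every step decreases r and at most u_i steps
   occur; hence this agrees with the paper's T_i wherever it is defined. *)
Definition T (u : seq nat) (i : nat) : nat :=
  Tloop u i (ucoord u i).+1 (ucoord u i) 0.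

Definition vnz (n z : nat) : seq nat :=
  [seq (if i < z then z + 1 - i else 1) | i <- iota 1 n].

Example T_example :
  [seq T [:: 14; 52; 4; 23; 9; 2] i | i <- iota 1 6] = [:: 14; 13; 4; 8; 3; 2].
Proof. by []. Qed.

Example vG_example :
  vG 2 [:: true; true; false; true; false; false] = [:: Posz 2; Posz 2].
Proof. by []. Qed.

(* Since v_{n,z} is nonincreasing, no earlier coordinate lies strictly below
   a_i, so the process defining T_i stops at once and T(v_{n,z}) = v_{n,z}.
   This vector is v_G for the Dyck path G = U^z D^z (UD)^(n+1-z): the first z
   letters D are preceded by z letters U, the i-th letter D with i > z by i. *)
From mathcomp Require Import all_boot all_order all_algebra.
From mathcomp Require Import zify.

Lemma T_prefix_min (u : seq nat) (i : nat) :
  (forall l, 1 <= l <= i -> ucoord u i <= ucoord u l) -> T u i = ucoord u i.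
Proof.
move=> u_i_min; rewrite /T /= /Tstep.
have -> : [seq l <- iota 1 i | ucoord u l < ucoord u i] = [::].
  apply/eqP; rewrite -[_ == _]negbK -has_filter; apply/hasPn => l.
  by rewrite mem_iota -leqNgt => hl; apply: u_i_min; lia.
by rewrite addn0.
Qed.

Lemma ucoord_vnz (n z l : nat) : 1 <= l <= n ->
  ucoord (vnz n z) l = if l < z then z + 1 - l else 1.
Proof.
move=> hl; rewrite /ucoord /vnz (nth_map 0) ?size_iota; last lia.
by rewrite nth_iota; [congr (if _ < _ then _ else _); lia | lia].
Qed.

Lemma T_vnz (n z i : nat) : 1 <= i <= n ->
  T (vnz n z) i = if i < z then z + 1 - i else 1.
Proof.
move=> hi; rewrite T_prefix_min ?ucoord_vnz // => l hl.
rewrite !ucoord_vnz; try lia.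
by case: (ltnP i z); case: (ltnP l z); lia.
Qed.

Lemma is_dyck_cat {a b : nat} {s t : seq bool} :
  is_dyck a s -> is_dyck b t -> is_dyck (a + b) (s ++ t).
Proof.
move=> [size_s [ups_s pref_s]] [size_t [ups_t pref_t]].
split; first by rewrite size_cat size_s size_t doubleD.
split; first by rewrite count_cat ups_s ups_t.
move=> k; rewrite take_cat; case: ltnP => _; first exact: pref_s.
have := pref_s (size s); rewrite take_size.
have := pref_t (k - size s); rewrite !count_cat; lia.
Qed.

Lemma is_dyck_peak (k : nat) : is_dyck k (nseq k true ++ nseq k false).
Proof.
split; first by rewrite size_cat !size_nseq addnn.
split; first by rewrite count_cat !count_nseq /= mul1n mul0n addn0.
move=> j; rewrite take_cat size_nseq.
case: ltnP => hj; first by rewrite take_nseq ?(ltnW hj) // count_nseq.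
have := count_size negb (take (j - k) (nseq k false)).
rewrite size_take_min size_nseq !count_cat !count_nseq /= mul1n mul0n; lia.
Qed.

Lemma is_dyck_UD_power (m : nat) : is_dyck m (flatten (nseq m [:: true; false])).
Proof.
elim: m => [|m IHm]; first by split=> //; split=> // -[].
by have := is_dyck_cat (is_dyck_peak 1) IHm; rewrite add1n.
Qed.

Lemma ups_before_D_cat (s t : seq bool) (c : nat) :
  ups_before_D (s ++ t) c = ups_before_D s c ++ ups_before_D t (c + count id s).
Proof.
by elim: s c => [|[] s IHs] c /=; rewrite ?addn0 ?IHs ?addSnnS ?add1n.
Qed.

Lemma ups_before_D_nseq (b : bool) (k c : nat) :
  ups_before_D (nseq k b) c = if b then [::] else nseq k c.
Proof. by case: b; elim: k c => [|k IHk] c //=; rewrite IHk. Qed.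

Lemma ups_before_D_UD_power (m c : nat) :
  ups_before_D (flatten (nseq m [:: true; false])) c = iota c.+1 m.
Proof. by elim: m c => [|m IHm] c //=; rewrite IHm. Qed.

Definition peak_then_UD (z m : nat) : seq bool :=
  nseq z true ++ nseq z false ++ flatten (nseq m [:: true; false]).

Lemma is_dyck_peak_then_UD (z m : nat) : is_dyck (z + m) (peak_then_UD z m).
Proof.
by rewrite /peak_then_UD catA; apply: is_dyck_cat (is_dyck_peak z) (is_dyck_UD_power m).
Qed.

Lemma mD_peak_then_UD (z m i : nat) : 1 <= i <= z + m ->
  mD (peak_then_UD z m) i = if i <= z then z else i.
Proof.
move=> hi; rewrite /mD /peak_then_UD !ups_before_D_cat !ups_before_D_nseq.
rewrite ups_before_D_UD_power.
rewrite !count_nseq /= mul1n mul0n add0n addn0.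
rewrite nth_cat size_nseq; case: ltnP => hz.
  by rewrite nth_nseq hz ifT //; lia.
rewrite nth_iota ?ifF; lia.
Qed.

Theorem proposition13 (n z : nat) :
  1 <= n -> 1 <= z <= n.+1 ->
  defines_dyck n [seq Posz (T (vnz n z) i) | i <- iota 1 n].
Proof.
move=> _ hz; exists (peak_then_UD z (n.+1 - z)); split.
  by have := is_dyck_peak_then_UD z (n.+1 - z); rewrite subnKC //; lia.
apply/eq_in_map => i; rewrite mem_iota => hi.
rewrite mD_peak_then_UD ?T_vnz; try lia.
by case: (leqP i z); case: (ltnP i z); lia.
Qed.
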